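(* Let $s>2$ be an integer, $A_s=\{0,1,\dots,s-1\}$, and let $A_0,A_1$ be disjoint subsets of $A_s$ with $A_0\cup A_1=A_s$, $A_0\neq A_s\neq A_1$. For a sequence $(\alpha_n)\in L_s$ define $(\beta_n)$ by $\beta_1=0$ if $\alpha_1\in A_0$, $\beta_1=1$ if $\alpha_1\in A_1$, and for $n\ge1$, $\beta_{n+1}=\beta_n$ if $\alpha_{n+1}=\alpha_n$ and $\beta_{n+1}=1-\beta_n$ if $\alpha_{n+1}\neq\alpha_n$, and set $F((\alpha_n))=\Delta^{2*}_{\beta_1\beta_2\dots}$. Then $f(\Delta^{s*}_{\alpha_1\alpha_2\dots})=F((\alpha_n))$ well defines a function $f:[0,1]\to[0,1]$; that is, whenever $(\alpha_n),(\alpha'_n)\in L_s$ satisfy $\Delta^{s*}_{\alpha_1\alpha_2\dots}=\Delta^{s*}_{\alpha'_1\alpha'_2\dots}$, we have $F((\alpha_n))=F((\alpha'_n))$.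
   Context: $L_s=A_s\times A_s\times\cdots$ denotes the space of sequences $(\alpha_n)$ with $\alpha_n\in A_s$. The $s*$-representation is an encoding of $[0,1]$ topologically equivalent to the classical $s$-adic one: there is a continuous strictly monotone surjection $h_s:[0,1]\to[0,1]$ such that $\Delta^{s*}_{\alpha_1\alpha_2\dots}=h_s\big(\sum_{n\ge1}\alpha_n s^{-n}\big)$ for every $(\alpha_n)\in L_s$. Likewise the $2*$-representation is given by a continuous strictly monotone surjection $h_2:[0,1]\to[0,1]$ via $\Delta^{2*}_{\beta_1\beta_2\dots}=h_2\big(\sum_{n\ge1}\beta_n 2^{-n}\big)$, $\beta_n\in\{0,1\}$. *)

From Stdlib Require Import Reals Lra Arith.
From Coquelicot Require Import Coquelicot.
Open Scope R_scope.

(* Sequences (alpha_n)_{n>=1} are represented as a : nat -> nat with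
   a k = alpha_{k+1}.  Membership in L_s: every digit lies in A_s = {0,..,s-1}. *)
Definition in_Ls (s : nat) (a : nat -> nat) : Prop := forall n, (a n < s)%nat.

Definition sadic_val (s : nat) (a : nat -> nat) : R :=
  Series (fun k => INR (a k) / INR s ^ (S k)).

Definition cont_on01 (h : R -> R) : Prop :=
  forall x, 0 <= x <= 1 -> forall eps, 0 < eps -> exists delta, 0 < delta /\
    forall y, 0 <= y <= 1 -> Rabs (y - x) < delta -> Rabs (h y - h x) < eps.

Definition strict_mono01 (h : R -> R) : Prop :=
  (forall x y, 0 <= x -> x < y -> y <= 1 -> h x < h y) \/
  (forall x y, 0 <= x -> x < y -> y <= 1 -> h y < h x).

Definition surj01 (h : R -> R) : Prop :=
  (forall x, 0 <= x <= 1 -> 0 <= h x <= 1) /\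
  (forall y, 0 <= y <= 1 -> exists x, 0 <= x <= 1 /\ h x = y).

Definition good_h (h : R -> R) : Prop :=
  cont_on01 h /\ strict_mono01 h /\ surj01 h.

Definition Delta_star (hs : R -> R) (s : nat) (a : nat -> nat) : R :=
  hs (sadic_val s a).

(* beta sequence: b k = beta_{k+1}.  A1 is the (boolean) membership test
   of A_1; beta_1 = 1 iff alpha_1 in A_1 (equivalently 0 iff alpha_1 in A_0,
   as A_0, A_1 partition A_s). *)
Fixpoint beta (A1 : nat -> bool) (a : nat -> nat) (k : nat) : nat :=
  match k with
  | O => if A1 (a O) then 1%nat else 0%nat
  | S k' => if Nat.eqb (a (S k')) (a k') then beta A1 a k'
            else (1 - beta A1 a k')%nat
  end.

Definition F (h2 : R -> R) (A1 : nat -> bool) (a : nat -> nat) : R :=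
  Delta_star h2 2 (beta A1 a).

(** Since [h_s] is strictly monotone, equal points [Δ^{s*}] have equal s-adic
    sums.  Two different digit sequences with the same s-adic sum differ by a
    carry: at the first index [n] where they differ, one digit exceeds the
    other by one and is followed by zeros, while the other is followed by
    [s-1]'s.  Both tails are constant and differ from the digit at [n], so each
    [β] sequence agrees with the other before [n] and is constantly [1 - β_n]
    after [n].  A binary sequence of the form [prefix, d, 1-d, 1-d, ...] has
    the value [prefix + 2^{-(n+1)}] whatever [d] is, hence the two binary sums,
    and so the two values of [F], coincide. *)

From Stdlib Require Import Reals Lra Lia Wf_nat Classical.
From Coquelicot Require Import Coquelicot.
Open Scope R_scope.

Lemma is_series_geom_tail (q : R) (m : nat) : 1 < q ->
  is_series (fun k => / q ^ S (m + k)) (/ q ^ m / (q - 1)).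
Proof.
  intros Hq.
  assert (Hinv : Rabs (/ q) < 1).
  { rewrite Rabs_pos_eq by (left; apply Rinv_0_lt_compat; lra).
    apply (Rmult_lt_reg_l q); [lra|]. rewrite Rinv_r; lra. }
  pose proof (is_series_scal_l (/ q ^ S m) _ _ (is_series_geom _ Hinv)) as Hgeom.
  replace (/ q ^ m / (q - 1)) with (/ q ^ S m * / (1 - / q)).
  - eapply is_series_ext; [|exact Hgeom]. intros k.
    change (/ q ^ S m * (/ q) ^ k = / q ^ S (m + k)).
    rewrite pow_inv, <- Rinv_mult, <- pow_add. reflexivity.
  - assert (q ^ m <> 0) by (apply pow_nonzero; lra).
    simpl. field. repeat split; lra.
Qed.

Lemma Series_geom_tail_scal (q c : R) (m : nat) : 1 < q ->
  Series (fun k => c * / q ^ S (m + k)) = c * (/ q ^ m / (q - 1)).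
Proof.
  intros Hq. rewrite Series_scal_l.
  now rewrite (is_series_unique _ _ (is_series_geom_tail q m Hq)).
Qed.

Lemma ex_series_geom_tail_scal (q c : R) (m : nat) : 1 < q ->
  ex_series (fun k => c * / q ^ S (m + k)).
Proof.
  intros Hq. apply (@ex_series_scal_l R_AbsRing R_NormedModule).
  eexists. now apply is_series_geom_tail.
Qed.

Lemma ex_series_le_geom_tail (q c : R) (m : nat) (u : nat -> R) : 1 < q ->
  (forall k, 0 <= u k <= c / q ^ S (m + k)) -> ex_series u.
Proof.
  intros Hq Hu.
  apply (@ex_series_le R_AbsRing R_CompleteNormedModule _ (fun k => c * / q ^ S (m + k))).
  - intros k. change (Rabs (u k) <= c / q ^ S (m + k)).
    rewrite Rabs_pos_eq; apply Hu.
  - now apply ex_series_geom_tail_scal.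
Qed.

Lemma Series_nonneg (u : nat -> R) :
  ex_series u -> (forall k, 0 <= u k) -> 0 <= Series u.
Proof.
  intros Hex Hu.
  rewrite <- (Rmult_0_l (Series u)), <- Series_scal_l.
  apply Series_le; [|exact Hex]. intros k. split; [lra|]. rewrite Rmult_0_l. apply Hu.
Qed.

Lemma Series_nonneg_eq0 (u : nat -> R) :
  ex_series u -> (forall k, 0 <= u k) -> Series u = 0 -> forall k, u k = 0.
Proof.
  intros Hex Hu H0 k.
  rewrite (Series_incr_n u (S k)) in H0 by (lia || exact Hex). simpl in H0.
  assert (0 <= Series (fun j => u (S (k + j)))).
  { apply Series_nonneg; [|intros; apply Hu].
    now apply (ex_series_incr_n u (S k)) in Hex. }
  assert (u k <= sum_f_R0 u k).
  { destruct k as [|k]; simpl; [lra|].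
    assert (0 <= sum_f_R0 u k) by (apply cond_pos_sum; exact Hu).
    lra. }
  specialize (Hu k). lra.
Qed.

Lemma Series_split_first_nonzero (d : nat -> R) (n : nat) :
  ex_series d -> (forall k, (k < n)%nat -> d k = 0) ->
  Series d = d n + Series (fun j => d (S (n + j))).
Proof.
  intros Hex Hz. rewrite (Series_incr_n_aux d n Hz), Series_incr_1.
  - rewrite Nat.add_0_r. f_equal. apply Series_ext. intros j. f_equal. lia.
  - now apply (ex_series_incr_n d n) in Hex.
Qed.

Lemma strict_mono01_inj (h : R -> R) (x y : R) : strict_mono01 h ->
  0 <= x <= 1 -> 0 <= y <= 1 -> h x = h y -> x = y.
Proof.
  intros Hmono Hx Hy Hxy.
  destruct (Rtotal_order x y) as [Hlt|[Heq|Hgt]]; [exfalso| exact Heq| exfalso];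
    destruct Hmono as [Hinc|Hdec].
  - specialize (Hinc x y ltac:(lra) Hlt ltac:(lra)). lra.
  - specialize (Hdec x y ltac:(lra) Hlt ltac:(lra)). lra.
  - specialize (Hinc y x ltac:(lra) Hgt ltac:(lra)). lra.
  - specialize (Hdec y x ltac:(lra) Hgt ltac:(lra)). lra.
Qed.

Section Digits.

Variable s : nat.
Hypothesis s_gt1 : (1 < s)%nat.

Let INR_s_gt1 : 1 < INR s.
Proof. now apply lt_1_INR. Qed.

Let INR_s_pow_pos (k : nat) : 0 < INR s ^ k.
Proof. apply pow_lt. lra. Qed.

Lemma digit_term_bounds (a : nat -> nat) (k : nat) : in_Ls s a ->
  0 <= INR (a k) / INR s ^ S k <= (INR s - 1) / INR s ^ S k.
Proof.
  intros Ha. pose proof (INR_s_pow_pos (S k)).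
  assert (INR (a k) <= INR s - 1).
  { assert (INR (S (a k)) <= INR s) by (apply le_INR, Ha).
    rewrite S_INR in *. lra. }
  split.
  - apply Rdiv_le_0_compat; [apply pos_INR | assumption].
  - apply Rmult_le_compat_r; [left; now apply Rinv_0_lt_compat | assumption].
Qed.

Lemma ex_series_digits (a : nat -> nat) : in_Ls s a ->
  ex_series (fun k => INR (a k) / INR s ^ S k).
Proof.
  intros Ha. apply (ex_series_le_geom_tail (INR s) (INR s - 1) 0); [exact INR_s_gt1|].
  intros k. now apply digit_term_bounds.
Qed.

Lemma Series_max_digit_tail (m : nat) :
  Series (fun k => (INR s - 1) * / INR s ^ S (m + k)) = / INR s ^ m.
Proof.
  rewrite Series_geom_tail_scal by exact INR_s_gt1.
  pose proof (INR_s_pow_pos m). field. lra.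
Qed.

Lemma sadic_val_bounds (a : nat -> nat) : in_Ls s a -> 0 <= sadic_val s a <= 1.
Proof.
  intros Ha. unfold sadic_val. split.
  - apply Series_nonneg; [now apply ex_series_digits|].
    intros k. now apply digit_term_bounds.
  - rewrite <- Rinv_1, <- (pow_O (INR s)), <- (Series_max_digit_tail 0).
    apply Series_le; [intros k; now apply digit_term_bounds|].
    apply ex_series_geom_tail_scal, INR_s_gt1.
Qed.

Lemma sadic_val_eq_carry (a a' : nat -> nat) (n : nat) :
  in_Ls s a -> in_Ls s a' -> sadic_val s a = sadic_val s a' ->
  (forall k, (k < n)%nat -> a k = a' k) -> (a' n < a n)%nat ->
  a n = S (a' n) /\ forall j, a (S (n + j)) = 0%nat /\ a' (S (n + j)) = (s - 1)%nat.
Proof.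
  intros Ha Ha' Hval Hpre Hlt.
  set (x := fun k => INR (a k) / INR s ^ S k).
  set (y := fun k => INR (a' k) / INR s ^ S k).
  (* On the tail, [x - y] is [u] minus the all-[(s-1)] tail, whose sum is one
     unit of digit [n]; so the carry at [n] and the nonnegative [u] sum to 0. *)
  set (u := fun j => INR (a (S (n + j)) + (s - 1 - a' (S (n + j))))
                     / INR s ^ S (S (n + j))).
  assert (Hu_nonneg : forall j, 0 <= u j).
  { intros j. apply Rdiv_le_0_compat; [apply pos_INR | apply INR_s_pow_pos]. }
  assert (Hu_ex : ex_series u).
  { apply (ex_series_le_geom_tail (INR s) (INR s + INR s) (S n)); [exact INR_s_gt1|].
    intros j. split; [apply Hu_nonneg|].
    apply Rmult_le_compat_r; [left; apply Rinv_0_lt_compat, INR_s_pow_pos|].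
    rewrite <- plus_INR. apply le_INR. specialize (Ha (S (n + j))). lia. }
  assert (Htail : forall j, x (S (n + j)) - y (S (n + j))
                            = u j - (INR s - 1) * / INR s ^ S (S n + j)).
  { intros j. unfold x, y, u. specialize (Ha' (S (n + j))).
    rewrite plus_INR, !minus_INR by lia. change (INR 1) with 1.
    change (S n + j)%nat with (S (n + j)). field.
    apply Rgt_not_eq, INR_s_pow_pos. }
  assert (Hsplit : 0 = (INR (a n) - INR (a' n) - 1) / INR s ^ S n + Series u).
  { assert (Hx := ex_series_digits a Ha). assert (Hy := ex_series_digits a' Ha').
    unfold sadic_val in Hval. fold x y in Hval, Hx, Hy.
    replace 0 with (Series (fun k => x k - y k)) by (rewrite Series_minus; auto; lra).
    rewrite (Series_split_first_nonzero _ n).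
    2: now apply (@ex_series_minus R_AbsRing R_NormedModule).
    2: intros k Hk; unfold x, y; rewrite Hpre by exact Hk; ring.
    rewrite (Series_ext _ _ Htail), Series_minus, Series_max_digit_tail; auto.
    2: apply ex_series_geom_tail_scal, INR_s_gt1.
    unfold x, y. pose proof (INR_s_pow_pos (S n)). field. lra. }
  assert (Hcarry : 0 <= (INR (a n) - INR (a' n) - 1) / INR s ^ S n).
  { apply Rdiv_le_0_compat; [|apply INR_s_pow_pos].
    assert (INR (S (a' n)) <= INR (a n)) by (apply le_INR; lia).
    rewrite S_INR in *. lra. }
  assert (Hu0 : Series u = 0) by (pose proof (Series_nonneg u Hu_ex Hu_nonneg); lra).
  split.
  - assert (Hdn : INR (a n) - INR (a' n) - 1 = 0).
    { apply (Rmult_eq_reg_r (/ INR s ^ S n)).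
      - fold ((INR (a n) - INR (a' n) - 1) / INR s ^ S n). lra.
      - apply Rinv_neq_0_compat, Rgt_not_eq, INR_s_pow_pos. }
    apply INR_eq. rewrite S_INR. lra.
  - intros j. pose proof (Series_nonneg_eq0 u Hu_ex Hu_nonneg Hu0 j) as Huj.
    unfold u in Huj. apply Rmult_integral in Huj as [Hnum|Hpow].
    + change 0 with (INR 0) in Hnum. apply INR_eq in Hnum.
      specialize (Ha' (S (n + j))). lia.
    + exfalso. revert Hpow. apply Rinv_neq_0_compat, Rgt_not_eq, INR_s_pow_pos.
Qed.

End Digits.

Lemma binary_val_eq_of_flipped_tails (b b' : nat -> nat) (n : nat) :
  in_Ls 2 b -> in_Ls 2 b' -> (forall k, (k < n)%nat -> b k = b' k) ->
  (forall j, b (S (n + j)) = (1 - b n)%nat) ->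
  (forall j, b' (S (n + j)) = (1 - b' n)%nat) ->
  sadic_val 2 b = sadic_val 2 b'.
Proof.
  intros Hb Hb' Hpre Htail Htail'.
  assert (H2 : 1 < INR 2) by (simpl; lra).
  assert (Hpow : INR 2 ^ S n <> 0) by (apply pow_nonzero; lra).
  unfold sadic_val. apply Rminus_diag_uniq.
  rewrite <- Series_minus by (apply ex_series_digits; auto).
  rewrite (Series_split_first_nonzero _ n).
  2: apply (@ex_series_minus R_AbsRing R_NormedModule); apply ex_series_digits; auto.
  2: intros k Hk; rewrite Hpre by exact Hk; ring.
  rewrite (Series_ext _ (fun j => (INR (b' n) - INR (b n)) * / INR 2 ^ S (S n + j))).
  2: { intros j. specialize (Hb n). specialize (Hb' n).
       rewrite Htail, Htail', !minus_INR by lia. simpl. field.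
       apply pow_nonzero. lra. }
  rewrite Series_geom_tail_scal by exact H2.
  replace (INR 2 - 1) with 1 by (simpl; lra). field. exact Hpow.
Qed.

Lemma beta_le_1 (A1 : nat -> bool) (a : nat -> nat) (k : nat) : (beta A1 a k <= 1)%nat.
Proof.
  induction k as [|k IH]; cbn [beta].
  - destruct (A1 (a 0%nat)); lia.
  - destruct (Nat.eqb (a (S k)) (a k)); lia.
Qed.

Lemma beta_in_L2 (A1 : nat -> bool) (a : nat -> nat) : in_Ls 2 (beta A1 a).
Proof. intros k. pose proof (beta_le_1 A1 a k). lia. Qed.

Lemma beta_eq_prefix (A1 : nat -> bool) (a a' : nat -> nat) (n : nat) :
  (forall k, (k < n)%nat -> a k = a' k) ->
  forall k, (k < n)%nat -> beta A1 a k = beta A1 a' k.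
Proof.
  intros Hpre k. induction k as [|k IH]; intros Hk; cbn [beta].
  - now rewrite Hpre.
  - rewrite (Hpre (S k)), (Hpre k), IH by lia. reflexivity.
Qed.

Lemma beta_succ_repeat (A1 : nat -> bool) (a : nat -> nat) (k : nat) :
  a (S k) = a k -> beta A1 a (S k) = beta A1 a k.
Proof. intros Hrep. cbn [beta]. now rewrite Hrep, Nat.eqb_refl. Qed.

Lemma beta_const_tail (A1 : nat -> bool) (a : nat -> nat) (n c : nat) :
  (forall j, a (S (n + j)) = c) -> c <> a n ->
  forall j, beta A1 a (S (n + j)) = (1 - beta A1 a n)%nat.
Proof.
  intros Hc Hne j. induction j as [|j IH].
  - rewrite Nat.add_0_r. cbn [beta].
    specialize (Hc 0%nat). rewrite Nat.add_0_r in Hc. rewrite Hc.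
    now destruct (Nat.eqb_spec c (a n)).
  - rewrite Nat.add_succ_r, beta_succ_repeat; [exact IH|].
    pose proof (Hc (S j)) as HcS. rewrite Nat.add_succ_r in HcS.
    now rewrite HcS, (Hc j).
Qed.

Lemma first_difference (a a' : nat -> nat) :
  (forall k, a k = a' k) \/
  exists n, a n <> a' n /\ forall k, (k < n)%nat -> a k = a' k.
Proof.
  destruct (classic (exists k, a k <> a' k)) as [Hdiff|Hsame].
  - right.
    assert (Hdec : forall k, a k <> a' k \/ ~ a k <> a' k).
    { intros k. destruct (Nat.eq_dec (a k) (a' k)); auto. }
    destruct (dec_inh_nat_subset_has_unique_least_element _ Hdec Hdiff)
      as [n [[Hn Hleast] _]].
    exists n. split; [exact Hn|]. intros k Hk.
    destruct (Nat.eq_dec (a k) (a' k)) as [|Hne]; [assumption|].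
    specialize (Hleast k Hne). lia.
  - left. intros k. apply NNPP. intros Hk. apply Hsame. now exists k.
Qed.

Lemma beta_val_eq_carry (s : nat) (A1 : nat -> bool) (a a' : nat -> nat) (n : nat) :
  (1 < s)%nat -> in_Ls s a -> in_Ls s a' -> sadic_val s a = sadic_val s a' ->
  (forall k, (k < n)%nat -> a k = a' k) -> (a' n < a n)%nat ->
  sadic_val 2 (beta A1 a) = sadic_val 2 (beta A1 a').
Proof.
  intros Hs Ha Ha' Hval Hpre Hlt.
  destruct (sadic_val_eq_carry s Hs a a' n Ha Ha' Hval Hpre Hlt) as [_ Htails].
  apply (binary_val_eq_of_flipped_tails _ _ n); try apply beta_in_L2.
  - now apply beta_eq_prefix.
  - apply (beta_const_tail A1 a n 0); [apply Htails | lia].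
  - apply (beta_const_tail A1 a' n (s - 1)); [apply Htails|].
    specialize (Ha n). lia.
Qed.

Lemma beta_val_eq (s : nat) (A1 : nat -> bool) (a a' : nat -> nat) :
  (1 < s)%nat -> in_Ls s a -> in_Ls s a' -> sadic_val s a = sadic_val s a' ->
  sadic_val 2 (beta A1 a) = sadic_val 2 (beta A1 a').
Proof.
  intros Hs Ha Ha' Hval.
  destruct (first_difference a a') as [Hsame|[n [Hne Hpre]]].
  - unfold sadic_val. apply Series_ext. intros k.
    rewrite (beta_eq_prefix A1 a a' (S k)); auto.
  - destruct (Nat.lt_gt_cases (a n) (a' n)) as [[Hlt|Hgt] _]; [exact Hne| |].
    + symmetry. apply (beta_val_eq_carry s A1 a' a n); auto.
      intros k Hk. symmetry. auto.
    + now apply (beta_val_eq_carry s A1 a a' n).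
Qed.

Theorem lemma2 (s : nat) (hs h2 : R -> R) (A0 A1 : nat -> bool) :
  (2 < s)%nat ->
  good_h hs -> good_h h2 ->
  (forall x, A0 x = true -> (x < s)%nat) ->
  (forall x, A1 x = true -> (x < s)%nat) ->
  (forall x, ~ (A0 x = true /\ A1 x = true)) ->
  (forall x, (x < s)%nat -> A0 x = true \/ A1 x = true) ->
  (exists x, (x < s)%nat /\ A0 x = false) ->
  (exists x, (x < s)%nat /\ A1 x = false) ->
  forall a a' : nat -> nat, in_Ls s a -> in_Ls s a' ->
    Delta_star hs s a = Delta_star hs s a' ->
    F h2 A1 a = F h2 A1 a'.
Proof.
  intros Hs [_ [Hmono _]] _ _ _ _ _ _ _ a a' Ha Ha' HDelta.
  assert (Hs1 : (1 < s)%nat) by lia.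
  unfold F, Delta_star. f_equal.
  apply (beta_val_eq s); auto.
  apply (strict_mono01_inj hs); auto; now apply sadic_val_bounds.
Qed.
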